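(* Let $(A,m)$ be an iterative midpoint set with associated infinitary operation $M\colon A^\omega\to A$. Then for every doubly indexed family $(x_{ij})_{i,j\ge 0}$ of elements of $A$, \[ M_i(M_j\,x_{ij}) = M_l\; m\big(m_{l+1}(x_{0\,(l+1)},\dots,x_{l\,(l+1)},x_{ll}),\; m_{l+1}(x_{(l+1)\,0},\dots,x_{(l+1)\,l},x_{ll})\big). \]
   Context: A midpoint set is a set $A$ with $m\colon A\times A\to A$ satisfying $m(x,x)=x$, $m(x,y)=m(y,x)$, $m(m(x,y),m(z,w))=m(m(x,z),m(y,w))$. It is iterative if for every set $X$ and functions $h\colon X\to A$, $t\colon X\to X$ there is a unique $u\colon X\to A$ with $u(x)=m(h(x),u(t(x)))$; equivalently there is a (unique) $M\colon A^\omega\to A$ with $M_i\,x_i=m(x_0,M_i\,x_{i+1})$ and such that whenever $y_i=m(x_i,y_{i+1})$ for all $i$ then $y_0=M_i\,x_i$. The derived $(n+1)$-ary operations are $m_0(x)=x$ and $m_n(x_0,\dots,x_n)=m(x_0,m_{n-1}(x_1,\dots,x_n))$ for $n\ge1$. *)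

From Stdlib Require Import Arith.

Definition midpoint_set (A : Type) (m : A -> A -> A) : Prop :=
  (forall x, m x x = x) /\
  (forall x y, m x y = m y x) /\
  (forall x y z w, m (m x y) (m z w) = m (m x z) (m y w)).

Definition iterative (A : Type) (m : A -> A -> A) : Prop :=
  forall (X : Type) (h : X -> A) (t : X -> X),
    exists! u : X -> A, forall x, u x = m (h x) (u (t x)).

Definition assoc_infinitary (A : Type) (m : A -> A -> A)
  (M : (nat -> A) -> A) : Prop :=
  (forall x : nat -> A, M x = m (x 0) (M (fun i => x (S i)))) /\
  (forall (x y : nat -> A), (forall i, y i = m (x i) (y (S i))) -> y 0 = M x).

(* Derived (n+1)-ary operations: mn n f = m_n(f 0, ..., f n). *)
Fixpoint mn {A : Type} (m : A -> A -> A) (n : nat) (f : nat -> A) : A :=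
  match n with
  | 0 => f 0
  | S k => m (f 0) (mn m k (fun i => f (S i)))
  end.

From Stdlib Require Import Arith Lia FunctionalExtensionality.

(** Let [T_n] be the double sum over the corner [p, q >= n], and [R_l(k)],
    [C_l(k)] the tails of row and column [k] from index [l] on.  Since [M] is
    a homomorphism for the medial operation [m], unfolding [T_n] once peels
    off its hook: [T_n = m (m R_(n+1)(n) C_(n+1)(n)) (m x_nn T_(n+1))].  Hence
    the sequence [y_l] obtained by folding [R_(l+1)(0..l)] and
    [C_(l+1)(0..l)] onto [m x_ll T_(l+1)] satisfies [y_0 = T_0] and
    [y_l = m hook_l y_(l+1)], and uniqueness of solutions of this recursion
    gives [T_0 = M_l hook_l]. *)

Section MidpointFold.

Context {A : Type} (m : A -> A -> A).
Hypothesis m_idem : forall x, m x x = x.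
Hypothesis m_medial : forall x y z w, m (m x y) (m z w) = m (m x z) (m y w).

Fixpoint mfold (n : nat) (a : nat -> A) (b : A) : A :=
  match n with
  | 0 => b
  | S k => m (a 0) (mfold k (fun i => a (S i)) b)
  end.

Lemma mn_mfold n f : mn m n f = mfold n f (f n).
Proof. revert f; induction n as [|n IH]; intros f; simpl; [reflexivity | now rewrite IH]. Qed.

Lemma eq_mfold n a a' b :
  (forall k, k < n -> a k = a' k) -> mfold n a b = mfold n a' b.
Proof.
  revert a a'; induction n as [|n IH]; intros a a' Ha; simpl; [reflexivity |].
  rewrite (Ha 0) by lia; f_equal; apply IH; intros k Hk; apply Ha; lia.
Qed.

Lemma mn_if_leb l f c :
  mn m (S l) (fun k => if Nat.leb k l then f k else c) = mfold (S l) f c.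
Proof.
  rewrite mn_mfold, (proj2 (Nat.leb_gt (S l) l)) by lia.
  apply eq_mfold; intros k Hk; now rewrite (proj2 (Nat.leb_le k l)) by lia.
Qed.

Lemma mfold_medial n a a' b b' :
  m (mfold n a b) (mfold n a' b') = mfold n (fun k => m (a k) (a' k)) (m b b').
Proof.
  revert a a'; induction n as [|n IH]; intros a a'; simpl; [reflexivity |].
  now rewrite m_medial, IH.
Qed.

Lemma mfold_succ_last n a b : mfold (S n) a b = mfold n a (m (a n) b).
Proof.
  revert a; induction n as [|n IH]; intros a; [reflexivity |].
  exact (f_equal (m (a 0)) (IH (fun i => a (S i)))).
Qed.

Lemma mfold_absorb n a u u' b c :
  (forall k, k < n -> u k = m (a k) (u' k)) ->
  m (mfold n a b) (mfold (S n) u' c) = mfold n u (m b (m (u' n) c)).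
Proof.
  intros Hu; rewrite mfold_succ_last, mfold_medial.
  symmetry; apply eq_mfold; exact Hu.
Qed.

Lemma m_distl x y z : m x (m y z) = m (m x y) (m x z).
Proof. now rewrite m_medial, m_idem. Qed.

End MidpointFold.

Section InfinitaryMidpoint.

Context {A : Type} (m : A -> A -> A) (M : (nat -> A) -> A).
Hypothesis m_idem : forall x, m x x = x.
Hypothesis m_comm : forall x y, m x y = m y x.
Hypothesis m_medial : forall x y z w, m (m x y) (m z w) = m (m x z) (m y w).
Hypothesis M_unfold : forall x, M x = m (x 0) (M (fun i => x (S i))).
Hypothesis M_unique :
  forall x y : nat -> A, (forall i, y i = m (x i) (y (S i))) -> y 0 = M x.

Lemma eq_M f g : (forall i, f i = g i) -> M f = M g.
Proof. intros Hfg; f_equal; extensionality i; apply Hfg. Qed.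

Lemma M_shift f n : M (fun q => f (n + q)) = m (f n) (M (fun q => f (S n + q))).
Proof.
  rewrite M_unfold, Nat.add_0_r; f_equal.
  apply eq_M; intros q; now rewrite Nat.add_succ_r.
Qed.

(* The shifted sums [M (x (i + _))] solve the recursion for [m x y], by mediality. *)
Lemma M_medial x y : M (fun i => m (x i) (y i)) = m (M x) (M y).
Proof.
  symmetry.
  apply (M_unique _ (fun i => m (M (fun j => x (i + j))) (M (fun j => y (i + j))))).
  intros i; now rewrite (M_shift x i), (M_shift y i), m_medial.
Qed.

Variable x : nat -> nat -> A.

Definition row_tail (l k : nat) : A := M (fun q => x k (l + q)).
Definition col_tail (l k : nat) : A := M (fun p => x (l + p) k).
Definition corner (n : nat) : A := M (fun p => row_tail n (n + p)).
Definition diag_tail (n : nat) : A := m (x n n) (corner (S n)).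

Lemma row_tail_shift l k : row_tail l k = m (x k l) (row_tail (S l) k).
Proof. exact (M_shift (x k) l). Qed.

Lemma corner_split n :
  corner n = m (m (row_tail (S n) n) (col_tail (S n) n)) (diag_tail n).
Proof.
  unfold corner at 1; rewrite (M_shift (fun p => row_tail n p) n).
  rewrite (eq_M _ (fun p => m (x (S n + p) n) (row_tail (S n) (S n + p))))
    by (intros p; apply row_tail_shift).
  rewrite M_medial, (row_tail_shift n n); fold (col_tail (S n) n) (corner (S n)).
  unfold diag_tail; now rewrite (m_medial (row_tail (S n) n)), (m_comm (row_tail (S n) n)).
Qed.

Definition hook (l : nat) : A :=
  m (mfold m (S l) (fun k => x k (S l)) (x l l))
    (mfold m (S l) (fun k => x (S l) k) (x l l)).

Definition hook_tail (l : nat) : A :=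
  m (mfold m (S l) (row_tail (S l)) (diag_tail l))
    (mfold m (S l) (col_tail (S l)) (diag_tail l)).

Lemma hook_tail0 : hook_tail 0 = corner 0.
Proof. unfold hook_tail; simpl mfold. now rewrite m_medial, m_idem, (corner_split 0). Qed.

Lemma hook_tail_step l : hook_tail l = m (hook l) (hook_tail (S l)).
Proof.
  unfold hook_tail at 1; rewrite (mfold_medial m m_medial), m_idem.
  unfold hook, hook_tail; rewrite (m_medial (mfold m (S l) _ _)).
  rewrite (mfold_absorb m m_medial _ _ (row_tail (S l)))
    by (intros k _; apply row_tail_shift).
  rewrite (mfold_absorb m m_medial _ _ (col_tail (S l)))
    by (intros k _; apply (M_shift (fun p => x p k))).
  rewrite (mfold_medial m m_medial), <- (m_distl m m_idem m_medial).
  rewrite (m_medial (row_tail _ _)), m_idem, <- corner_split.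
  reflexivity.
Qed.

Lemma corner0_hooks : corner 0 = M hook.
Proof. rewrite <- hook_tail0; apply M_unique; exact hook_tail_step. Qed.

End InfinitaryMidpoint.

Theorem mainTheorem5 (A : Type) (m : A -> A -> A) (M : (nat -> A) -> A)
  (Hmid : midpoint_set A m) (Hit : iterative A m)
  (HM : assoc_infinitary A m M) (x : nat -> nat -> A) :
  M (fun i => M (fun j => x i j)) =
  M (fun l =>
       m (mn m (S l) (fun k => if Nat.leb k l then x k (S l) else x l l))
         (mn m (S l) (fun k => if Nat.leb k l then x (S l) k else x l l))).
Proof.
  destruct Hmid as [m_idem [m_comm m_medial]], HM as [M_unfold M_unique].
  transitivity (M (hook m x)).
  - exact (corner0_hooks m M m_idem m_comm m_medial M_unfold M_unique x).
  - apply eq_M; intros l; unfold hook.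
    now rewrite !mn_if_leb.
Qed.
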